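(* For all integers $m\ge1$, $r\ge0$ and $n\ge0$, $$\mathcal D_{m,r}(n,x)=\sum_{k=0}^n\left(\frac12\sum_{l=0}^{n-k}\binom nl W_{m,r}(n-l,k)\,T^{[m]}_l(1)+\frac12W_{m,r}(n,k)\right)\mathcal E_k(x).$$
   Context: The Euler polynomials are defined by $\sum_{n\ge0}\mathcal E_n(x)\frac{t^n}{n!}=\frac{2e^{xt}}{e^t+1}$. For integers $m\ge1$, $n,k,r\ge0$, $W_{m,r}(n,k)$ denotes the $r$-Whitney number of the second kind, defined by $\sum_{n\ge k}W_{m,r}(n,k)\frac{z^n}{n!}=\frac{e^{rz}}{k!}\left(\frac{e^{mz}-1}{m}\right)^k$; the $r$-Dowling polynomial is $\mathcal D_{m,r}(n,u):=\sum_{k=0}^nW_{m,r}(n,k)u^k$; and the $[m]$-Touchard polynomials are $T^{[m]}_n(x):=\sum_{k=0}^n W_{m,0}(n,k)x^k$ (so $T^{[m]}_0=1$). *)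

From HB Require Import structures.
From mathcomp Require Import all_boot all_order all_algebra.
Set Implicit Arguments. Unset Strict Implicit. Unset Printing Implicit Defensive.
Import Order.TTheory GRing.Theory Num.Theory.
Local Open Scope ring_scope.

(* r-Whitney numbers of the second kind W_{m,r}(n,k): n! times the coefficient
   of z^n in e^{rz}/k! ((e^{mz}-1)/m)^k, i.e. after expanding (e^{mz}-1)^k
   binomially:  1/(m^k k!) * sum_{j=0}^k (-1)^(k-j) C(k,j) (m j + r)^n. *)
Definition whitney (m r n k : nat) : rat :=
  ((m%:R ^+ k * (k`!)%:R)^-1) *
  \sum_(j < k.+1) ((-1) ^+ (k - j) * ('C(k, j))%:R * ((m * j + r)%N%:R) ^+ n).

Definition dowling (m r n : nat) : {poly rat} :=
  \sum_(k < n.+1) (whitney m r n k)%:P * 'X^k.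

Definition touchard (m n : nat) : {poly rat} :=
  \sum_(k < n.+1) (whitney m 0 n k)%:P * 'X^k.

(* Euler polynomials, from 2 e^{xt}/(e^t+1): comparing coefficients of t^n/n!
   in (e^t + 1) * sum_n E_n(x) t^n/n! = 2 e^{xt} gives
   sum_{k=0}^n C(n,k) E_k(x) + E_n(x) = 2 x^n, i.e.
   E_n(x) = x^n - 1/2 * sum_{k<n} C(n,k) E_k(x). *)
Fixpoint euler_list (n : nat) : seq {poly rat} :=
  match n with
  | 0%N => [:: 1]
  | n'.+1 =>
      let s := euler_list n' in
      rcons s ('X^n - (2%:R^-1 : rat) *:
                  \sum_(k < n) ('C(n, k))%:R *: s`_k)
  end.

Definition euler_poly (n : nat) : {poly rat} := (euler_list n)`_n.

(* Inverting the recursion of the Euler polynomials gives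
   x^k = (sum_{j<=k} C(k,j) E_j(x) + E_k(x)) / 2, so the coefficient of E_j in
   D_{m,r}(n,x) is half of W_{m,r}(n,j) plus half of sum_k C(k,j) W_{m,r}(n,k).
   For the latter, W_{m,r}(n,k) is (m^k k!)^-1 times the k-th forward difference
   at 0 of c |-> (mc+r)^n.  Expanding (m(c+i)+r)^n binomially in mc splits a
   difference of order j+a into differences of orders a and j, which gives
   C(j+a,j) W_{m,r}(n,j+a) = sum_l C(n,l) W_{m,r}(n-l,j) W_{m,0}(l,a); summing
   over a produces T_l(1).  Differences of order above the degree vanish, which
   keeps every sum finite. *)

From HB Require Import structures.
From mathcomp Require Import all_boot all_order all_algebra.
From mathcomp Require Import ring zify.
Import Order.TTheory GRing.Theory Num.Theory.
Local Open Scope ring_scope.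

Lemma big_ord_narrow_eq0 (V : nmodType) n p (F : nat -> V) : (n <= p)%N ->
  (forall i, (n <= i < p)%N -> F i = 0) ->
  \sum_(i < p) F i = \sum_(i < n) F i.
Proof.
move=> le_np F0; rewrite [RHS](big_ord_widen p F le_np) [RHS]big_mkcond /=.
by apply: eq_bigr => i _; case: (ltnP i n) => // le_ni; rewrite F0 // le_ni ltn_ord.
Qed.

Section FiniteDifferences.

Context {V : zmodType}.

Definition fdiff (f : nat -> V) : nat -> V := fun i => f i.+1 - f i.

Definition fdiffn k (f : nat -> V) : nat -> V := iter k fdiff f.

Lemma fdiffnS k f i : fdiffn k.+1 f i = fdiffn k f i.+1 - fdiffn k f i.
Proof. by rewrite /fdiffn iterS. Qed.

Lemma fdiffn_shift k (f : nat -> V) c i :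
  fdiffn k (fun j => f (c + j)%N) i = fdiffn k f (c + i)%N.
Proof. by elim: k i => [|k IH] i; rewrite ?fdiffnS ?IH ?addnS. Qed.

End FiniteDifferences.

Section RingFiniteDifferences.

Context {R : pzRingType}.

Lemma fdiffn_lin {I : Type} {s : seq I} {c : I -> R} {F : I -> nat -> R} {f} :
  f =1 (fun i => \sum_(p <- s) c p * F p i) ->
  forall k i, fdiffn k f i = \sum_(p <- s) c p * fdiffn k (F p) i.
Proof.
move=> eq_f; elim=> [|k IH] i; first exact: eq_f.
by rewrite fdiffnS !IH -sumrB; apply: eq_bigr => p _; rewrite fdiffnS mulrBr.
Qed.

Lemma fdiffnE k (f : nat -> R) i :
  fdiffn k f i = \sum_(b < k.+1) (-1) ^+ (k - b) * 'C(k, b)%:R * f (i + b)%N.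
Proof.
elim: k i => [|k IH] i.
  by rewrite big_ord1 subnn bin0 expr0 mulr1n !mul1r addn0.
have signS b : (b < k)%N -> (-1) ^+ (k.+1 - b.+1) = - (-1) ^+ (k - b.+1) :> R.
  by move=> lt_bk; rewrite subSS -(subnSK lt_bk) exprS mulN1r.
rewrite fdiffnS !IH [in RHS]big_ord_recl /=.
under [in RHS]eq_bigr => b _ do
  rewrite /bump /= add1n binS natrD mulrDr mulrDl.
rewrite big_split /= [RHS]addrC [RHS]addrAC [RHS]addrC; congr (_ + _).
  by apply: eq_bigr => b _; rewrite subSS addnS.
rewrite addrC [in RHS]big_ord_recr /= (@bin_small k k.+1) // mulr0 mul0r addr0.
rewrite [in LHS]big_ord_recl /= subn0 bin0 addn0 opprD subSn // exprS mulN1r !mulNr.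
rewrite subn0 bin0; congr (_ + _); rewrite -sumrN; apply: eq_bigr => b _.
by rewrite /bump /= add1n signS ?ltn_ord // !mulNr.
Qed.

End RingFiniteDifferences.

Section AffinePowers.

Context {R : comPzRingType}.

Definition affpow (a b : R) n : nat -> R := fun c => (a *+ c + b) ^+ n.

Lemma fdiff_affpow a b n :
  fdiff (affpow a b n) =1
  (fun i => \sum_(p < n) ('C(n, p.+1)%:R * a ^+ p.+1) * affpow a b (n - p.+1) i).
Proof.
move=> i; rewrite /fdiff /affpow mulrSr addrAC exprDn big_ord_recl.
rewrite bin0 subn0 expr0 mulr1 mulr1n addrAC subrr add0r.
by apply: eq_bigr => p _; rewrite -mulr_natr; ring.
Qed.

Lemma fdiffn_affpow_eq0 a b n k i : (n < k)%N -> fdiffn k (affpow a b n) i = 0.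
Proof.
elim/ltn_ind: n k i => n IH [|k] i // lt_nk.
rewrite /fdiffn iterSr -/(fdiffn k _ i) (fdiffn_lin (fdiff_affpow a b n)).
by apply: big1 => p _; rewrite IH ?mulr0 //; have := ltn_ord p; lia.
Qed.

Lemma fdiffn_affpow_add p q a b n :
  fdiffn (p + q) (affpow a b n) 0 =
  \sum_(l < n.+1)
    'C(n, l)%:R * fdiffn p (affpow a 0 l) 0 * fdiffn q (affpow a b (n - l)) 0.
Proof.
have shifted c : fdiffn q (affpow a b n) c =
    \sum_(l < n.+1) ('C(n, l)%:R * affpow a 0 l c) * fdiffn q (affpow a b (n - l)) 0.
  rewrite -[c]addn0 -fdiffn_shift addn0; apply: fdiffn_lin => i.
  rewrite /affpow (addnC c i) mulrnDr addrAC exprDn.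
  by apply: eq_bigr => l _; rewrite addr0 -mulr_natr; ring.
rewrite /fdiffn iterD -!/(fdiffn _ _).
under eq_bigr => l _ do rewrite mulrAC.
apply: fdiffn_lin => c; rewrite shifted.
by apply: eq_bigr => l _; rewrite mulrAC.
Qed.

End AffinePowers.

Definition whitney_scale (m k : nat) : rat := (m%:R ^+ k * k`!%:R)^-1.

Lemma whitneyE m r n k :
  whitney m r n k = whitney_scale m k * fdiffn k (affpow m%:R r%:R n) 0.
Proof.
rewrite fdiffnE /whitney /whitney_scale; congr (_ * _); apply: eq_bigr => j _.
by rewrite /affpow natrD mulrnA.
Qed.

Lemma whitney_eq0 m r n k : (n < k)%N -> whitney m r n k = 0.
Proof. by move=> lt_nk; rewrite whitneyE fdiffn_affpow_eq0 ?mulr0. Qed.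

Lemma whitney_scaleD m j a : (0 < m)%N ->
  'C(j + a, j)%:R * whitney_scale m (j + a) = whitney_scale m j * whitney_scale m a.
Proof.
move=> m_gt0; have := bin_fact (leq_addr a j); rewrite addKn /whitney_scale => <-.
have fact_neq0 i : (i`!%:R : rat) != 0 by rewrite pnatr_eq0 -lt0n fact_gt0.
have m_neq0 : (m%:R : rat) != 0 by rewrite pnatr_eq0 -lt0n.
have bin_neq0 : ('C(j + a, j)%:R : rat) != 0 by rewrite pnatr_eq0 -lt0n bin_gt0 leq_addr.
by rewrite !natrM exprD; field; rewrite bin_neq0 !fact_neq0 !expf_neq0.
Qed.

(* The coefficient form of e^{rz} ((e^{mz}-1)/m)^(j+a)
   = [e^{rz} ((e^{mz}-1)/m)^j] ((e^{mz}-1)/m)^a. *)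
Lemma whitney_convolution m r n j a : (0 < m)%N ->
  'C(j + a, j)%:R * whitney m r n (j + a) =
  \sum_(l < n.+1) 'C(n, l)%:R * whitney m r (n - l) j * whitney m 0 l a.
Proof.
move=> m_gt0; rewrite whitneyE mulrA whitney_scaleD // addnC fdiffn_affpow_add.
rewrite mulr_sumr; apply: eq_bigr => l _; rewrite !whitneyE; ring.
Qed.

Lemma touchard_at1 m l : (touchard m l).[1] = \sum_(a < l.+1) whitney m 0 l a.
Proof.
rewrite /touchard horner_sum; apply: eq_bigr => a _.
by rewrite hornerCM hornerXn expr1n mulr1.
Qed.

Lemma whitney_binomial_sum m r n j : (0 < m)%N ->
  \sum_(k < n.+1) 'C(k, j)%:R * whitney m r n k =
  \sum_(l < (n - j).+1) 'C(n, l)%:R * whitney m r (n - l) j * (touchard m l).[1].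
Proof.
move=> m_gt0.
rewrite -(@big_ord_narrow_eq0 _ _ (j + n.+1)
  (fun k => 'C(k, j)%:R * whitney m r n k)) ?leq_addl //; last first.
  by move=> k /andP[lt_nk _]; rewrite whitney_eq0 ?mulr0.
rewrite big_split_ord /= big1 ?add0r => [|k _]; last by rewrite bin_small ?mul0r.
under eq_bigr => a _ do rewrite whitney_convolution //.
rewrite exchange_big -(@big_ord_narrow_eq0 _ (n - j).+1 n.+1
  (fun l => 'C(n, l)%:R * whitney m r (n - l) j * (touchard m l).[1])) ?ltnS ?leq_subr //.
  apply: eq_bigr => l _; rewrite touchard_at1 mulr_sumr.
  rewrite -(@big_ord_narrow_eq0 _ l.+1 n.+1
    (fun a => 'C(n, l)%:R * whitney m r (n - l) j * whitney m 0 l a)) ?ltn_ord //.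
  by move=> a /andP[lt_la _]; rewrite (@whitney_eq0 m 0 l a) ?mulr0.
by move=> l /andP[lt_l lt_ln]; rewrite whitney_eq0 ?mulr0 ?mul0r //; lia.
Qed.

Lemma size_euler_list n : size (euler_list n) = n.+1.
Proof. by elim: n => //= n IH; rewrite size_rcons IH. Qed.

Lemma nth_euler_list n k : (k <= n)%N -> (euler_list n)`_k = euler_poly k.
Proof.
elim: n => [|n IH]; first by case: k.
rewrite leq_eqVlt => /orP[/eqP -> //|lt_kn].
by rewrite /= nth_rcons size_euler_list lt_kn IH.
Qed.

Lemma euler_polyE k : euler_poly k =
  'X^k - (2%:R^-1 : rat) *: \sum_(j < k) 'C(k, j)%:R *: euler_poly j.
Proof.
case: k => [|k]; first by rewrite big_ord0 scaler0 subr0.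
rewrite /euler_poly /= nth_rcons size_euler_list ltnn eqxx.
by congr (_ - _ *: _); apply: eq_bigr => j _; rewrite nth_euler_list // -ltnS.
Qed.

Lemma Xn_euler k : 'X^k =
  (2%:R^-1 : rat) *: (\sum_(j < k.+1) 'C(k, j)%:R *: euler_poly j + euler_poly k).
Proof.
have half_half : (2%:R^-1 : rat) + 2%:R^-1 = 1 by [].
rewrite big_ord_recr /= binn scale1r -addrA !scalerDr -scalerDl half_half scale1r.
by rewrite {1}(euler_polyE k) addrC subrK.
Qed.

Lemma poly_euler_expansion (w : nat -> rat) n :
  \sum_(k < n.+1) w k *: 'X^k =
  \sum_(j < n.+1)
    ((2%:R^-1 : rat) * \sum_(k < n.+1) 'C(k, j)%:R * w k + 2%:R^-1 * w j) *: euler_poly j.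
Proof.
have Xk_euler k : (k < n.+1)%N -> 'X^k =
    (2%:R^-1 : rat) *: (\sum_(j < n.+1) 'C(k, j)%:R *: euler_poly j + euler_poly k).
  move=> lt_kn; rewrite Xn_euler.
  rewrite (@big_ord_narrow_eq0 _ k.+1 n.+1 (fun j => 'C(k, j)%:R *: euler_poly j)) //.
  by move=> j /andP[lt_kj _]; rewrite bin_small ?scale0r.
under eq_bigr => k _ do rewrite Xk_euler // scalerA mulrC -scalerA scalerDr scaler_sumr.
under [RHS]eq_bigr => j _ do rewrite scalerDl -!scalerA scaler_suml.
rewrite -scaler_sumr !big_split /= -!scaler_sumr -scalerDr exchange_big /=.
by congr (_ *: (_ + _)); apply: eq_bigr => j _; apply: eq_bigr => k _; rewrite scalerA mulrC.
Qed.

Theorem mainTheorem17 (m r n : nat) (hm : (1 <= m)%N) :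
  dowling m r n =
  \sum_(k < n.+1)
     ((2%:R^-1 : rat) *
        \sum_(l < (n - k).+1)
           ('C(n, l))%:R * whitney m r (n - l) k * (touchard m l).[1]
      + (2%:R^-1 : rat) * whitney m r n k) *: euler_poly k.
Proof.
rewrite /dowling; under eq_bigr do rewrite mul_polyC.
rewrite (poly_euler_expansion (whitney m r n)).
by apply: eq_bigr => k _; rewrite whitney_binomial_sum.
Qed.
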